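(* Let $(\Omega,\mathcal F)$ be a measurable space with $\Sigma\neq\emptyset$, $\nu$ a finite measure on it, and $\mu$ a finite measure with $\mu\ll\nu$. Let $F_\mu(y)=\nu(\{\omega: \frac{d\mu}{d\nu}(\omega)\le y\})$ for $y\ge0$ and $v_\mu(A)=\int_0^\infty\min(\nu(\Omega)-F_\mu(z),\nu(A))\,dz$ for $A\in\mathcal F$. Then: (1) $v_\mu$ is non-decreasing, continuous, submodular, and $v_\mu(\emptyset)=0$; (2) $v_\mu(\{\omega:\frac{d\mu}{d\nu}(\omega)>y\})=\mu(\{\omega:\frac{d\mu}{d\nu}(\omega)>y\})$ for all $y\ge0$; (3) for every non-negative measurable $f:\Omega\to[0,\infty)$, with $v_\mu(f)=\int_0^\infty v_\mu(\{\omega: f(\omega)>z\})\,dz$, $$v_\mu(f)\ge\sup\Big\{\int_\Omega f\,d\mu'\ \Big|\ \mu'\text{ a finite measure},\ \mu'\ll\nu,\ F_{\mu'}=F_\mu\Big\};$$ in particular $v_\mu(A)\ge\sup\{\mu'(A)\mid \mu'\text{ finite measure},\ \mu'\ll\nu,\ F_{\mu'}=F_\mu\}$ for all $A\in\mathcal F$.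
   Context: $\Sigma$ denotes the set of all classes $\mathcal I\subset\mathcal F$ that are chains (totally ordered by inclusion), contain $\emptyset$ and $\Omega$, and generate $\mathcal F$ as a $\sigma$-algebra. $\frac{d\mu}{d\nu}$ is the (non-negative) Radon–Nikodym derivative. $v$ is non-decreasing if $v(A)\le v(B)$ for $A\subset B$; submodular if $v(A)+v(B)\ge v(A\cup B)+v(A\cap B)$. For $\mathcal I\in\Sigma$ let $\mathcal J$ be the algebra generated by $\mathcal I$, whose elements are the sets $\bigcup_{i=1}^n (C_i\cap D_i^c)$ with $C_1\supset D_1\supset\cdots\supset C_n\supset D_n$ in $\mathcal I$; define $\mu_{v,\mathcal I}(\bigcup_{i=1}^n (C_i\cap D_i^c))=\sum_{i=1}^n(v(C_i)-v(D_i))$. A non-decreasing $v$ is continuous if for every $\mathcal I\in\Sigma$ this $\mu_{v,\mathcal I}$ is $\sigma$-additive on $\mathcal J$. $F_{\mu'}$ is defined from $\mu'$ in the same way as $F_\mu$. *)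

From HB Require Import structures.
From mathcomp Require Import all_boot all_order all_algebra.
From mathcomp Require Import all_classical all_reals all_analysis.
Set Implicit Arguments. Unset Strict Implicit. Unset Printing Implicit Defensive.
Import Order.TTheory GRing.Theory Num.Theory.
Local Open Scope classical_set_scope.
Local Open Scope ring_scope.
Local Open Scope ereal_scope.

Section defs.
Context d (T : measurableType d) (R : realType).

Definition chain_class (I : set (set T)) : Prop :=
  [/\ I `<=` measurable,
      (forall A B, I A -> I B -> A `<=` B \/ B `<=` A),
      I set0, I setT &
      <<s I >> = measurable].

(* A \in J(I) with representation C_0 ⊇ D_0 ⊇ C_1 ⊇ ... ⊇ D_{n-1} in I *)
Definition chain_repr (I : set (set T)) (n : nat) (C D : nat -> set T) : Prop :=
  (forall i, (i < n)%N -> I (C i) /\ I (D i) /\ D i `<=` C i) /\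
  (forall i, (i.+1 < n)%N -> C i.+1 `<=` D i).

Definition chain_union (n : nat) (C D : nat -> set T) : set T :=
  \bigcup_(i in [set i | (i < n)%N]) (C i `&` ~` D i).

Definition chain_algebra (I : set (set T)) : set (set T) :=
  [set A | exists n C D, chain_repr I n C D /\ A = chain_union n C D].

Definition is_mu_v_I (v : set T -> \bar R) (I : set (set T))
    (m : set T -> \bar R) : Prop :=
  forall n C D, chain_repr I n C D ->
    m (chain_union n C D) = \sum_(0 <= i < n) (v (C i) - v (D i)).

Definition sigma_additive_on (J : set (set T)) (m : set T -> \bar R) : Prop :=
  forall A : (set T)^nat, (forall k, J (A k)) -> trivIset setT A ->
    J (\bigcup_k A k) ->
    (fun n => \sum_(0 <= k < n) m (A k)) @ \oo --> m (\bigcup_k A k).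

Definition nondecreasing_sf (v : set T -> \bar R) : Prop :=
  forall A B, measurable A -> measurable B -> A `<=` B -> v A <= v B.

Definition submodular_sf (v : set T -> \bar R) : Prop :=
  forall A B, measurable A -> measurable B ->
    v (A `|` B) + v (A `&` B) <= v A + v B.

Definition continuous_sf (v : set T -> \bar R) : Prop :=
  forall I, chain_class I ->
    exists m, is_mu_v_I v I m /\ sigma_additive_on (chain_algebra I) m.

Definition RN (nu mu : {finite_measure set T -> \bar R}) : T -> \bar R :=
  Radon_Nikodym_SigmaFinite.f mu nu.

Definition Fdist (nu mu : {finite_measure set T -> \bar R}) (y : R) : \bar R :=
  nu [set w | RN nu mu w <= y%:E].

Definition v_mu (nu mu : {finite_measure set T -> \bar R}) (A : set T) : \bar R :=
  \int[lebesgue_measure]_(z in `[0%R, +oo[%classic)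
     mine (nu setT - Fdist nu mu z) (nu A).

Definition choquet (v : set T -> \bar R) (f : T -> R) : \bar R :=
  \int[lebesgue_measure]_(z in `[0%R, +oo[%classic) v [set w | (z < f w)%R].

End defs.

(* With g(z) = nu(dmu/dnu > z), the set function factors as v_mu(A) = phi(nu(A)) for
   phi(t) = int_0^oo min(g(z), t) dz, which is nondecreasing and concave in t: this gives
   monotonicity and submodularity.  By the layer-cake formula
   mu'(A) = int_0^oo nu(A & {dmu'/dnu > z}) dz, and the integrand is bounded by
   min(nu(dmu'/dnu > z), nu(A)) = min(g(z), nu(A)) as soon as F_mu' = F_mu; equality holds
   when A is itself an upper level set of dmu/dnu.
   For continuity, phi is the distribution function of the measure
   rho(X) = int_0^oo lambda(X & [0, g(z))) dz on the line.  Given a generating chain I, send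
   a set A of the algebra J to the set of levels s in (0, nu(Omega)] such that A meets every
   shell E' \ E with E, E' in I and nu(E) < s <= nu(E').  For A = U_i (C_i \ D_i) this is
   the disjoint union of the intervals (nu(D_i), nu(C_i)], so rho of it is mu_{v,I}(A) and
   its Lebesgue measure is nu(A).  The map preserves disjointness and is monotone, so for a
   countable disjoint union in J it loses only a Lebesgue-null set, which rho does not see;
   sigma-additivity of mu_{v,I} then follows from that of rho. *)
From HB Require Import structures.
From mathcomp Require Import all_boot all_order all_algebra.
From mathcomp Require Import all_classical all_reals all_analysis.
From mathcomp Require Import measurable_realfun.
From mathcomp Require Import lra.
Set Implicit Arguments. Unset Strict Implicit. Unset Printing Implicit Defensive.
Import Order.TTheory GRing.Theory Num.Theory.
Local Open Scope classical_set_scope.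
Local Open Scope ring_scope.
Local Open Scope ereal_scope.

Lemma integral_layer_cake d (T : measurableType d) (R : realType)
    (M : {sigma_finite_measure set T -> \bar R}) (A : set T) (f : T -> R) : measurable A -> measurable_fun setT f -> (forall w, (0 <= f w)%R) ->
  \int[M]_(w in A) (f w)%:E =
  \int[lebesgue_measure]_(z in `[0%R, +oo[%classic) M (A `&` [set w | (z < f w)%R]).
Proof.
move=> mA mf f0.
pose S := (A `*` `[0%R, +oo[%classic) `&` [set p : T * R | (p.2 < f p.1)%R].
have mS : measurable S.
  apply: measurableI; first exact: measurableX.
  have : measurable_fun setT (fun p : T * R => (p.2 < f p.1)%R).
    exact: measurable_fun_ltr measurable_snd (measurableT_comp mf measurable_fst).
  by move=> /(_ measurableT [set true]); rewrite setTI; apply.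
have mIS : measurable_fun setT (fun p => (\1_S p : R)%:E).
  exact/measurable_EFinP/measurable_indic.
have IS0 p : 0 <= (\1_S p : R)%:E by rewrite lee_fin.
rewrite [LHS]integral_mkcond [RHS]integral_mkcond.
transitivity (\int[M]_x \int[lebesgue_measure]_y (\1_S (x, y) : R)%:E).
  apply: eq_integral => x _.
  rewrite (_ : (fun y => _) = (fun y => (\1_[set y | S (x, y)] y : R)%:E))//.
  rewrite integral_indic//= ?setIT; last first.
    by have := pair1_measurable x measurableT mS; rewrite setTI.
  rewrite patchE; case: ifPn => [/set_mem Ax|/negP Ax]; last first.
    rewrite [X in lebesgue_measure X](_ : _ = set0) ?measure0//.
    by apply/seteqP; split=> y // -[[/mem_set]].
  rewrite (_ : [set y | S (x, y)] = `[0%R, f x[%classic).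
    by rewrite lebesgue_measure_itv/= lte_fin oppr0 adde0; case: ltgtP (f0 x) => // <-.
  apply/seteqP; split => y /=; rewrite !in_itv/= ?andbT.
    by case=> -[_ /=]; rewrite in_itv/= andbT => -> ->.
  by move=> /andP[y0 yf]; split => //; split => //=; rewrite in_itv/= y0.
rewrite (@fubini_tonelli _ _ _ _ _ M lebesgue_measure _ mIS IS0); apply: eq_integral => y _.
rewrite integral_indic//= ?setIT; last by have := pair2_measurable y measurableT mS; rewrite setTI.
rewrite patchE; case: ifPn => [/set_mem y0|/negP y0].
  by congr (M _); apply/seteqP; split => x /=; [case=> -[]|case=> Ax yf; split].
rewrite [X in M X](_ : _ = set0) ?measure0//.
by apply/seteqP; split=> x // -[[_ /mem_set]].
Qed.

Lemma nonincreasing_measurable_EFin (R : realType) (D : set R) (h : R -> R) :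
  measurable D -> {homo h : x y / (x <= y)%R >-> (y <= x)%R} ->
  measurable_fun D (EFin \o h).
Proof. by move=> mD hn; apply/measurable_EFinP; exact: nonincreasing_measurable. Qed.

Lemma nonincreasing_fin_num_measurable (R : realType) (D : set R) (k : R -> \bar R) :
  measurable D -> (forall z, k z \is a fin_num) ->
  {homo k : x y / (x <= y)%R >-> y <= x} -> measurable_fun D k.
Proof.
move=> mD kfin kn; rewrite (_ : k = EFin \o fine \o k); last first.
  by apply/funext => z /=; rewrite fineK.
by apply: nonincreasing_measurable_EFin => // x y /kn; apply: fine_le.
Qed.

Lemma minr_concave (R : realFieldType) (g a b p q : R) :
  (q <= a)%R -> (q <= b)%R -> (p + q = a + b)%R ->
  (Num.min g p + Num.min g q <= Num.min g a + Num.min g b)%R.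
Proof.
move=> qa qb pq.
by case: (leP g p) => ?; case: (leP g q) => ?; case: (leP g a) => ?; case: (leP g b) => ?; lra.
Qed.

Lemma lebesgue_measure_itv_ocI_co (R : realType) (a b c : R) :
  (0 <= a)%R -> (a <= b)%R -> (0 <= c)%R ->
  lebesgue_measure (`]a, b]%classic `&` `[0%R, c[%classic) =
  (Num.min c b - Num.min c a)%:E.
Proof.
move=> a0 ab c0.
have [ca|ac] := leP c a.
  rewrite min_l ?(le_trans ca ab)// subrr [X in lebesgue_measure X](_ : _ = set0) ?measure0//.
  by apply/seteqP; split => s //= []; rewrite !in_itv/= => /andP[? _] /andP[_ ?]; lra.
have [cb|bc] := leP c b.
  rewrite (_ : _ `&` _ = `]a, c[%classic).
    by rewrite lebesgue_measure_itv/= lte_fin ac -EFinD.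
  apply/seteqP; split => s /=; rewrite !in_itv/=.
    by case=> /andP[-> _] /andP[_ ->].
  by move=> /andP[? ?]; split; apply/andP; split; lra.
rewrite (_ : _ `&` _ = `]a, b]%classic).
  rewrite lebesgue_measure_itv/= lte_fin -EFinD.
  by case: ltgtP ab => // -> _; rewrite subrr.
apply/seteqP; split => s /=; first by case.
by move=> sab; split=> //=; move: sab; rewrite !in_itv/= => /andP[? ?]; apply/andP; split; lra.
Qed.

Lemma measure_bigcup_ltn d (T : measurableType d) (R : realType)
    (M : {measure set T -> \bar R}) (F : nat -> set T) n :
  (forall i, (i < n)%N -> measurable (F i)) ->
  (forall i j, (i < j < n)%N -> F i `&` F j = set0) ->
  M (\bigcup_(i in `I_n) F i) = \sum_(0 <= i < n) M (F i).
Proof.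
move=> mF tF; rewrite measure_fin_bigcup//; last first.
  apply/trivIsetP => i j /= ilt jlt; rewrite neq_ltn => /orP[] ij.
    by apply: tF; rewrite ij.
  by rewrite setIC; apply: tF; rewrite ij.
by rewrite -fsbig_ord big_mkord.
Qed.

Section profile.
Context d (T : measurableType d) (R : realType).
Variables nu mu : {finite_measure set T -> \bar R}.
Hypothesis mu_ac : mu `<< nu.
Local Notation Leb := (@lebesgue_measure R).

Definition rn w : R := fine (RN nu mu w).

Definition tail (z : R) : R := fine (nu [set w | (z < rn w)%R]).

Definition profile (t : R) : \bar R :=
  \int[Leb]_(z in `[0%R, +oo[%classic) (Num.min (tail z) t)%:E.

Lemma RNE w : RN nu mu w = (rn w)%:E.
Proof. by rewrite fineK//; exact: Radon_Nikodym_SigmaFinite.f_fin_num. Qed.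

Lemma rn_ge0 w : (0 <= rn w)%R.
Proof. by rewrite fine_ge0//; exact: Radon_Nikodym_SigmaFinite.f_ge0. Qed.

Lemma measurable_rn : measurable_fun setT rn.
Proof.
apply: measurableT_comp => //.
exact: measurable_int (Radon_Nikodym_SigmaFinite.f_integrable mu_ac).
Qed.

Lemma measurable_rn_gt (z : R) : measurable [set w | (z < rn w)%R].
Proof.
by have := measurable_rn measurableT (measurable_itv `]z, +oo[); rewrite setTI preimage_itvoy.
Qed.

Lemma tailE z : nu [set w | (z < rn w)%R] = (tail z)%:E.
Proof. by rewrite fineK// fin_num_measure//; exact: measurable_rn_gt. Qed.

Lemma tail_ge0 z : (0 <= tail z)%R.
Proof. exact/fine_ge0/measure_ge0. Qed.

Lemma tail_nonincreasing : {homo tail : x y / (x <= y)%R >-> (y <= x)%R}.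
Proof.
move=> x y xy; rewrite -lee_fin -!tailE le_measure ?inE//; try exact: measurable_rn_gt.
by move=> w /=; apply: le_lt_trans.
Qed.

Lemma Fdist_tail z : nu setT - Fdist nu mu z = (tail z)%:E.
Proof.
have -> : Fdist nu mu z = nu (~` [set w | (z < rn w)%R]).
  by congr (nu _); apply/seteqP; split => w /=; rewrite RNE lee_fin leNgt => /negP.
have mB := measurable_rn_gt z.
rewrite -tailE -(setUCr [set w | (z < rn w)%R]) measureU ?setICr//; last exact: measurableC.
by rewrite addeK// fin_num_measure//; exact: measurableC.
Qed.

Lemma mu_layer_cake A : measurable A ->
  mu A = \int[Leb]_(z in `[0%R, +oo[%classic) nu (A `&` [set w | (z < rn w)%R]).
Proof.
move=> mA; rewrite (Radon_Nikodym_SigmaFinite.f_integral mu_ac)//.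
rewrite -integral_layer_cake//; last exact: rn_ge0; last exact: measurable_rn.
by apply: eq_integral => w _; exact: RNE.
Qed.

Lemma v_muE A : measurable A -> v_mu nu mu A = profile (fine (nu A)).
Proof.
move=> mA; apply: eq_integral => z _.
by rewrite Fdist_tail EFin_min (fineK (fin_num_measure _ _ mA)).
Qed.

Lemma min_tail_ge0 z t : (0 <= t)%R -> 0 <= (Num.min (tail z) t)%:E.
Proof. by move=> t0; rewrite lee_fin le_min tail_ge0 t0. Qed.

Lemma measurable_min_tail (t : R) :
  measurable_fun (`[0%R, +oo[%classic : set R) (fun z => (Num.min (tail z) t)%:E).
Proof.
apply: nonincreasing_measurable_EFin => // x y xy.
by rewrite le_min !ge_min (tail_nonincreasing xy) lexx !orbT.
Qed.

Lemma profile_ge0 t : (0 <= t)%R -> 0 <= profile t.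
Proof. by move=> t0; apply: integral_ge0 => z _; exact: min_tail_ge0. Qed.

Lemma profile_fin_num t : (0 <= t)%R -> profile t \is a fin_num.
Proof.
move=> t0; rewrite ge0_fin_numE ?profile_ge0//.
apply: le_lt_trans (_ : mu setT < +oo); last first.
  by rewrite -ge0_fin_numE// fin_num_measure.
rewrite (mu_layer_cake measurableT); apply: ge0_le_integral => //.
- by move=> z _; exact: min_tail_ge0.
- exact: measurable_min_tail.
- apply: nonincreasing_fin_num_measurable => //.
    by move=> z; rewrite setTI fin_num_measure//; exact: measurable_rn_gt.
  by move=> x y xy; rewrite !setTI !tailE lee_fin tail_nonincreasing.
- by move=> z _; rewrite setTI tailE lee_fin ge_min lexx.
Qed.

Lemma le_profile t1 t2 : (0 <= t1)%R -> (t1 <= t2)%R -> profile t1 <= profile t2.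
Proof.
move=> t10 t12; apply: ge0_le_integral => //.
- by move=> z _; exact: min_tail_ge0.
- exact: measurable_min_tail.
- exact: measurable_min_tail.
- by move=> z _; rewrite lee_fin le_min !ge_min lexx t12 !orbT.
Qed.

Lemma profile0 : profile 0 = 0.
Proof.
by rewrite /profile (eq_integral (cst 0)) ?integral0// => z _; rewrite min_r ?tail_ge0.
Qed.

End profile.

Section v_mu_properties.
Context d (T : measurableType d) (R : realType).
Variables nu mu : {finite_measure set T -> \bar R}.
Hypothesis mu_ac : mu `<< nu.

Lemma v_mu_nondecreasing : nondecreasing_sf (v_mu nu mu).
Proof.
move=> A B mA mB AB; rewrite !v_muE//.
apply: (le_profile mu_ac); first exact/fine_ge0/measure_ge0.
by apply: fine_le; rewrite ?fin_num_measure//; apply: le_measure; rewrite ?inE.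
Qed.

Lemma v_mu0 : v_mu nu mu set0 = 0.
Proof. by rewrite v_muE// measure0 profile0. Qed.

Lemma v_mu_submodular : submodular_sf (v_mu nu mu).
Proof.
move=> A B mA mB.
have mU : measurable (A `|` B) by exact: measurableU.
have mI : measurable (A `&` B) by exact: measurableI.
rewrite !v_muE//.
have nu_fin X : measurable X -> nu X \is a fin_num by move=> mX; rewrite fin_num_measure.
have nuUI : (fine (nu (A `|` B)) + fine (nu (A `&` B)) = fine (nu A) + fine (nu B))%R.
  apply: EFin_inj; rewrite !EFinD !fineK ?nu_fin// measureUfinl//; last first.
    by rewrite -ge0_fin_numE ?nu_fin.
  by rewrite subeK ?nu_fin.
have nuIA : (fine (nu (A `&` B)) <= fine (nu A))%R.
  by apply: fine_le; rewrite ?nu_fin//; apply: le_measure; rewrite ?inE.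
have nuIB : (fine (nu (A `&` B)) <= fine (nu B))%R.
  by apply: fine_le; rewrite ?nu_fin//; apply: le_measure; rewrite ?inE.
have nu_ge0 X : (0 <= fine (nu X))%R by exact/fine_ge0/measure_ge0.
have mmin t := measurable_min_tail mu_ac t.
rewrite -!ge0_integralD//; try exact: mmin; try by move=> z _; exact: min_tail_ge0.
apply: ge0_le_integral => //.
- by move=> z _; apply: adde_ge0; exact: min_tail_ge0.
- by apply: emeasurable_funD; exact: mmin.
- by apply: emeasurable_funD; exact: mmin.
- by move=> z _; rewrite -!EFinD lee_fin; exact: minr_concave.
Qed.

Lemma v_mu_RN_gt y : (0 <= y)%R ->
  v_mu nu mu [set w | y%:E < RN nu mu w] = mu [set w | y%:E < RN nu mu w].
Proof.
move=> y0; have -> : [set w | y%:E < RN nu mu w] = [set w | (y < rn nu mu w)%R].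
  by apply/seteqP; split => w /=; rewrite RNE// lte_fin.
have my := measurable_rn_gt mu_ac y.
rewrite v_muE// tailE// (mu_layer_cake mu_ac my); apply: eq_integral => z _.
have -> : [set w | (y < rn nu mu w)%R] `&` [set w | (z < rn nu mu w)%R] =
          [set w | (Num.max y z < rn nu mu w)%R].
  by apply/seteqP; split => w /=; rewrite gt_max; [case=> -> ->|case/andP].
rewrite tailE//; congr EFin.
by have [yz|/ltW zy] := leP y z; [rewrite min_l|rewrite min_r]; rewrite ?tail_nonincreasing.
Qed.

End v_mu_properties.

Section same_distribution.
Context d (T : measurableType d) (R : realType).
Variables nu mu mu' : {finite_measure set T -> \bar R}.
Hypotheses (mu_ac : mu `<< nu) (mu'_ac : mu' `<< nu).
Hypothesis Fdist_eq : Fdist nu mu' = Fdist nu mu.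

Lemma le_v_mu A : measurable A -> mu' A <= v_mu nu mu A.
Proof.
move=> mA; have mAz z : measurable (A `&` [set w | (z < rn nu mu' w)%R]).
  exact/measurableI/measurable_rn_gt.
have tail_eq z : tail nu mu' z = tail nu mu z.
  by apply: EFin_inj; rewrite -!Fdist_tail// Fdist_eq.
rewrite (mu_layer_cake mu'_ac mA) (v_muE mu_ac mA).
apply: ge0_le_integral => //.
- apply: nonincreasing_fin_num_measurable => // [z|x y xy].
    exact: fin_num_measure.
  by apply: le_measure; rewrite ?inE// => w [Aw yw]; split => //=; apply: le_lt_trans yw.
- exact: measurable_min_tail.
- move=> z _; rewrite EFin_min -tail_eq -tailE// fineK ?fin_num_measure//.
  by rewrite le_min !le_measure ?inE//; exact: measurable_rn_gt.
Qed.

Lemma le_choquet_v_mu (f : T -> R) : measurable_fun setT f -> (forall w, (0 <= f w)%R) ->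
  \int[mu']_w (f w)%:E <= choquet (v_mu nu mu) f.
Proof.
move=> mf f0.
have mfz z : measurable [set w | (z < f w)%R].
  by have := mf measurableT _ (measurable_itv `]z, +oo[); rewrite setTI preimage_itvoy.
have fz_nonincr x y : (x <= y)%R -> [set w | (y < f w)%R] `<=` [set w | (x < f w)%R].
  by move=> xy w /=; apply: le_lt_trans.
rewrite integral_layer_cake//; apply: ge0_le_integral => //.
- apply: nonincreasing_fin_num_measurable => // [z|x y /fz_nonincr xy].
    by rewrite setTI fin_num_measure.
  by rewrite !setTI le_measure ?inE.
- apply: nonincreasing_fin_num_measurable => // [z|x y /fz_nonincr xy].
    by rewrite v_muE// profile_fin_num//; exact/fine_ge0/measure_ge0.
  exact: v_mu_nondecreasing.
- by move=> z _; rewrite setTI le_v_mu.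
Qed.

End same_distribution.

Section continuity.
Context d (T : measurableType d) (R : realType).
Variables nu mu : {finite_measure set T -> \bar R}.
Hypothesis mu_ac : mu `<< nu.
Local Notation Leb := (@lebesgue_measure R).

Definition profile_measure (X : set R) : \bar R :=
  \int[Leb]_(z in `[0%R, +oo[%classic) Leb (X `&` `[0%R, tail nu mu z[%classic).

Lemma measurable_profile_measure_integrand X : measurable X ->
  measurable_fun (`[0%R, +oo[%classic : set R)
    (fun z => Leb (X `&` `[0%R, tail nu mu z[%classic)).
Proof.
move=> mX; apply: nonincreasing_fin_num_measurable => // [z|x y xy].
  rewrite ge0_fin_numE//; apply: le_lt_trans (_ : Leb `[0%R, tail nu mu z[ < +oo).
    by apply: le_measure; rewrite ?inE//; exact: measurableI.
  by rewrite lebesgue_measure_itv/=; case: ifP => _; rewrite ?ltry// -EFinD ltry.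
apply: le_measure; rewrite ?inE; try exact: measurableI.
move=> s [Xs /=]; rewrite !in_itv/= => /andP[s0 sy]; split=> //=.
by rewrite s0 (lt_le_trans sy)// tail_nonincreasing.
Qed.

Lemma profile_measure0 : profile_measure set0 = 0.
Proof.
by rewrite /profile_measure (eq_integral (cst 0)) ?integral0// => z _; rewrite set0I measure0.
Qed.

Lemma profile_measure_ge0 X : 0 <= profile_measure X.
Proof. by apply: integral_ge0 => z _; exact: measure_ge0. Qed.

Lemma profile_measure_semi_sigma_additive : semi_sigma_additive profile_measure.
Proof.
move=> F mF tF mUF.
rewrite [X in _ --> X](_ : _ = \int[Leb]_(z in `[0%R, +oo[%classic)
    \sum_(n <oo) Leb (F n `&` `[0%R, tail nu mu z[%classic)); last first.
  apply: eq_integral => z _; rewrite setI_bigcupl; apply/esym/cvg_lim => //.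
  apply: measure_semi_sigma_additive.
  - by move=> n; apply: measurableI => //; exact: mF.
  - exact: trivIset_setIr.
  - by rewrite -setI_bigcupl; exact: measurableI.
apply/cvg_closeP; split.
  by apply: is_cvg_nneseries => n _ _; exact: profile_measure_ge0.
by rewrite closeE// integral_nneseries// => n; exact: measurable_profile_measure_integrand.
Qed.

HB.instance Definition _ := isMeasure.Build _ _ _ profile_measure
  profile_measure0 profile_measure_ge0 profile_measure_semi_sigma_additive.

Lemma profile_measure_itv a b : (0 <= a)%R -> (a <= b)%R ->
  profile_measure `]a, b]%classic = profile nu mu b - profile nu mu a.
Proof.
move=> a0 ab; suff -> : profile nu mu b = profile nu mu a + profile_measure `]a, b]%classic.
  by rewrite [profile nu mu a + _]addeC addeK// profile_fin_num.
rewrite /profile /profile_measure -ge0_integralD//.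
- apply: eq_integral => z _; rewrite lebesgue_measure_itv_ocI_co// ?tail_ge0//.
  by rewrite -EFinD addrC subrK.
- by move=> z _; exact: min_tail_ge0.
- exact: measurable_min_tail.
- exact: measurable_profile_measure_integrand.
Qed.

Lemma profile_measure_null X : measurable X -> Leb X = 0 -> profile_measure X = 0.
Proof.
move=> mX X0; rewrite /profile_measure (eq_integral (cst 0)) ?integral0// => z _.
apply/eqP; rewrite eq_le measure_ge0 andbT -X0 le_measure ?inE//.
exact: measurableI.
Qed.


Section chain.
Variable I : set (set T).
Hypothesis I_chain : chain_class I.

Let I_measurable : I `<=` measurable. Proof. by case: I_chain. Qed.
Let I_total A B : I A -> I B -> A `<=` B \/ B `<=` A.
Proof. by case: I_chain => _ + _ _ _; apply. Qed.
Let I0 : I set0. Proof. by case: I_chain. Qed.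
Let IT : I setT. Proof. by case: I_chain. Qed.

Local Notation nr E := (fine (nu E)).

Let nr_ge0 E : (0 <= nr E)%R. Proof. exact/fine_ge0/measure_ge0. Qed.

Let le_nr E E' : measurable E -> measurable E' -> E `<=` E' -> (nr E <= nr E')%R.
Proof. by move=> mE mE' EE'; apply: fine_le; rewrite ?fin_num_measure// le_measure ?inE. Qed.

Definition shell_levels (A : set T) : set R := [set s | [/\ (0 < s)%R, (s <= nr setT)%R &
  forall E E', I E -> I E' -> (nr E < s)%R -> (s <= nr E')%R -> A `&` (E' `\` E) !=set0]].

Definition level_itv (C D : nat -> set T) i : set R := `]nr (D i), nr (C i)]%classic.

Lemma shell_levels_subset A B : A `<=` B -> shell_levels A `<=` shell_levels B.
Proof.
move=> AB s [s0 sT shell]; split=> // E E' IE IE' Es sE'.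
by have [w [Aw E'Ew]] := shell E E' IE IE' Es sE'; exists w; split => //; exact: AB.
Qed.

Section chain_repr.
Variables (n : nat) (C D : nat -> set T).
Hypothesis CD_repr : chain_repr I n C D.

Lemma chain_reprP i : (i < n)%N -> [/\ I (C i), I (D i) & D i `<=` C i].
Proof. by case: CD_repr => + _ => /[apply] -[? []]. Qed.

Lemma chain_repr_CD i k : (i < k < n)%N -> C k `<=` D i.
Proof.
elim: k => // k IH /andP[]; rewrite ltnS leq_eqVlt => /orP[/eqP <-|ik] kn.
  exact: CD_repr.2.
have [_ _ DC] := chain_reprP (ltnW kn).
by apply: subset_trans (CD_repr.2 k kn) (subset_trans DC (IH _)); rewrite ik ltnW.
Qed.

Lemma chain_repr_DD i k : (i <= k < n)%N -> D k `<=` D i.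
Proof.
case/andP; rewrite leq_eqVlt => /orP[/eqP -> _|ik kn]; first exact: subset_refl.
have [_ _ DC] := chain_reprP kn.
by apply: subset_trans DC (chain_repr_CD _); rewrite ik.
Qed.

Lemma chain_repr_CC i k : (i <= k < n)%N -> C k `<=` C i.
Proof.
case/andP; rewrite leq_eqVlt => /orP[/eqP -> _|ik kn]; first exact: subset_refl.
have [_ _ DC] := chain_reprP (ltn_trans ik kn).
by apply: subset_trans (chain_repr_CD _) DC; rewrite ik.
Qed.

Lemma measurable_chain_piece i : (i < n)%N -> measurable (C i `&` ~` D i).
Proof.
by move=> /chain_reprP[ICi IDi _]; apply: measurableI; [|apply: measurableC]; exact: I_measurable.
Qed.

Lemma chain_piece_disj i j : (i < j < n)%N -> (C i `&` ~` D i) `&` (C j `&` ~` D j) = set0.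
Proof.
by move=> /chain_repr_CD CD; apply/seteqP; split => // w [[_ nDw] [/CD Dw _]].
Qed.

Lemma level_itv_disj i j : (i < j < n)%N -> level_itv C D i `&` level_itv C D j = set0.
Proof.
move=> /andP[ij jn]; have [ICj _ _] := chain_reprP jn.
have [_ IDi _] := chain_reprP (ltn_trans ij jn).
have CD := le_nr (I_measurable ICj) (I_measurable IDi) (chain_repr_CD (introT andP (conj ij jn))).
apply/seteqP; split => // s []; rewrite /level_itv/= !in_itv/= => /andP[Ds _] /andP[_ sC].
by have := lt_le_trans (le_lt_trans CD Ds) sC; rewrite ltxx.
Qed.

Lemma level_itv_sub_shell_levels i : (i < n)%N ->
  level_itv C D i `<=` shell_levels (chain_union n C D).
Proof.
move=> ilt s; rewrite /level_itv/= in_itv/= => /andP[Ds sC].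
have [ICi IDi DC] := chain_reprP ilt.
have [mC mD] := (I_measurable ICi, I_measurable IDi).
split; first exact: le_lt_trans (nr_ge0 _) Ds.
  exact: le_trans sC (le_nr mC measurableT (@subsetT _ _)).
move=> E E' IE IE' Es sE'; apply: contrapT => noA.
have [mE mE'] := (I_measurable IE, I_measurable IE').
have gap : E' `&` C i `<=` E `|` D i.
  move=> w [E'w Cw]; apply: contrapT => /not_orP[nEw nDw].
  by apply: noA; exists w; split; [exists i|].
have nrU : (nr (E `|` D i) < s)%R.
  by case: (I_total IE IDi) => [/setUidr|/setUidl] ->.
have nrI : (s <= nr (E' `&` C i))%R.
  by case: (I_total IE' ICi) => [/setIidl|/setIidr] ->.
have := le_nr (measurableI _ _ mE' mC) (measurableU _ _ mE mD) gap.
by move=> /le_lt_trans /(_ nrU) /lt_le_trans /(_ nrI); rewrite ltxx.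
Qed.

Lemma shell_levels_sub_level_itv :
  shell_levels (chain_union n C D) `<=` \bigcup_(i in `I_n) level_itv C D i.
Proof.
move=> s [s0 sT shell]; apply: contrapT => no_itv.
have exP : exists k, (k == n) || (nr (C k) < s)%R by exists n; rewrite eqxx.
case: (ex_minnP exP) => i Pi i_min.
have i_le_n : (i <= n)%N by apply: i_min; rewrite eqxx.
have [E' [IE' sE' E'D]] :
    exists E', [/\ I E', (s <= nr E')%R & forall j, (j < i)%N -> E' `<=` D j].
  case: i Pi i_min i_le_n => [|k] _ i_min kn; first by exists setT.
  have [_ IDk _] := chain_reprP kn.
  have /norP[_] : ~~ ((k == n) || (nr (C k) < s)%R).
    by apply/negP => /i_min; rewrite ltnn.
  rewrite -leNgt => sC; exists (D k); split => //.
    by rewrite leNgt; apply/negP => Ds; apply: no_itv; exists k => //; rewrite /level_itv/= in_itv/= Ds.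
  by move=> j; rewrite ltnS => jk; apply: chain_repr_DD; rewrite jk.
have [E [IE Es CE]] :
    exists E, [/\ I E, (nr E < s)%R & forall j, (i <= j < n)%N -> C j `<=` E].
  case: eqP Pi => [-> _|/eqP ni /= Cs].
    exists set0; split; rewrite ?measure0//.
    by move=> j /andP[nj jn]; have := leq_ltn_trans nj jn; rewrite ltnn.
  have ilt : (i < n)%N by rewrite ltn_neqAle ni.
  exists (C i); split => //; first by have [] := chain_reprP ilt.
  exact: chain_repr_CC.
have [w [[j /= jn [Cjw nDjw]] [E'w nEw]]] := shell E E' IE IE' Es sE'.
have [ji|ij] := ltnP j i; first exact/nDjw/(E'D j ji).
by apply/nEw/(CE j); rewrite ?ij.
Qed.

Lemma shell_levels_chain_union :
  shell_levels (chain_union n C D) = \bigcup_(i in `I_n) level_itv C D i.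
Proof.
apply/seteqP; split; first exact: shell_levels_sub_level_itv.
by move=> s [i /= ilt]; exact: level_itv_sub_shell_levels.
Qed.

Lemma lebesgue_shell_levels :
  Leb (shell_levels (chain_union n C D)) = nu (chain_union n C D).
Proof.
rewrite shell_levels_chain_union measure_bigcup_ltn; last 2 first.
- by move=> i _; exact: measurable_itv.
- exact: level_itv_disj.
rewrite measure_bigcup_ltn; last 2 first.
- exact: measurable_chain_piece.
- exact: chain_piece_disj.
apply: eq_big_nat => i /andP[_ ilt].
have [ICi IDi DC] := chain_reprP ilt.
have [mC mD] := (I_measurable ICi, I_measurable IDi).
rewrite -setDE measureD// ?(setIidr DC); last by rewrite -ge0_fin_numE// fin_num_measure.
transitivity (Leb `]nr (D i), nr (C i)]%classic) => //.
rewrite lebesgue_measure_itv/= lte_fin.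
rewrite -[in RHS](fineK (fin_num_measure _ _ mC)) -[in RHS](fineK (fin_num_measure _ _ mD)).
by case: ltgtP (le_nr mD mC DC) => [_ _|//|-> _]; rewrite ?EFinN ?subee.
Qed.

Lemma profile_measure_shell_levels :
  profile_measure (shell_levels (chain_union n C D)) =
  \sum_(0 <= i < n) (v_mu nu mu (C i) - v_mu nu mu (D i)).
Proof.
rewrite shell_levels_chain_union measure_bigcup_ltn; last 2 first.
- by move=> i _; exact: measurable_itv.
- exact: level_itv_disj.
apply: eq_big_nat => i /andP[_ ilt].
have [ICi IDi DC] := chain_reprP ilt.
have [mC mD] := (I_measurable ICi, I_measurable IDi).
transitivity (profile_measure `]nr (D i), nr (C i)]%classic) => //.
by rewrite profile_measure_itv ?le_nr// !v_muE.
Qed.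

End chain_repr.

Lemma chain_algebra_measurable A : chain_algebra I A -> measurable A.
Proof.
by case=> n [C [D [CD ->]]]; apply: bigcup_measurable => i; exact: measurable_chain_piece.
Qed.

Lemma measurable_shell_levels A : chain_algebra I A -> measurable (shell_levels A).
Proof.
case=> n [C [D [CD ->]]]; rewrite shell_levels_chain_union//.
by apply: bigcup_measurable => i _; exact: measurable_itv.
Qed.

Lemma lebesgue_shell_levels_chain_algebra A :
  chain_algebra I A -> Leb (shell_levels A) = nu A.
Proof. by case=> n [C [D [CD ->]]]; exact: lebesgue_shell_levels. Qed.

Lemma trivIset_shell_levels (A : (set T)^nat) :
  (forall k, chain_algebra I (A k)) -> trivIset setT A ->
  trivIset setT (fun k => shell_levels (A k)).
Proof.
move=> JA tA j k _ _ [s [Njs Nks]].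
have [n [C [D [CD Aj]]]] := JA j.
move: Njs; rewrite Aj shell_levels_chain_union// => -[i /= ilt].
rewrite /level_itv/= in_itv/= => /andP[Ds sC].
have [ICi IDi _] := chain_reprP CD ilt.
have [_ _ /(_ _ _ IDi ICi Ds sC) [w [Akw [Ciw nDiw]]]] := Nks.
by apply: tA => //; exists w; split => //; rewrite Aj; exists i.
Qed.

Lemma is_mu_v_I_profile_measure :
  is_mu_v_I (v_mu nu mu) I (profile_measure \o shell_levels).
Proof. by move=> n C D CD; exact: profile_measure_shell_levels. Qed.

Lemma sigma_additive_profile_measure :
  sigma_additive_on (chain_algebra I) (profile_measure \o shell_levels).
Proof.
move=> A JA tA JU /=.
pose U := \bigcup_k shell_levels (A k).
have mN k := measurable_shell_levels (JA k).
have mU : measurable U by exact: bigcup_measurable.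
have mNU := measurable_shell_levels JU.
have UN : U `<=` shell_levels (\bigcup_k A k).
  by apply: bigcup_sub => k _; apply: shell_levels_subset; exact: bigcup_sup.
have LebU : Leb U = nu (\bigcup_k A k).
  rewrite measure_bigcup//; last 2 first.
  - by move=> k _; exact: mN.
  - exact: trivIset_shell_levels.
  rewrite [RHS]measure_bigcup//; last by move=> k _; exact: chain_algebra_measurable.
  by apply: eq_eseriesr => k _; exact: lebesgue_shell_levels_chain_algebra.
have null : Leb (shell_levels (\bigcup_k A k) `\` U) = 0.
  have nu_fin : nu (\bigcup_k A k) \is a fin_num.
    by rewrite fin_num_measure//; exact: chain_algebra_measurable.
  rewrite measureD//.
    by rewrite setIidr//= LebU lebesgue_shell_levels_chain_algebra// subee.
  by rewrite /= lebesgue_shell_levels_chain_algebra// -ge0_fin_numE.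
rewrite (measureDI profile_measure mNU mU) /=.
rewrite profile_measure_null ?add0e ?setIidr//; last exact: measurableD.
exact: measure_semi_sigma_additive (trivIset_shell_levels JA tA) mU.
Qed.

End chain.
End continuity.

Lemma v_mu_continuous d (T : measurableType d) (R : realType)
    (nu mu : {finite_measure set T -> \bar R}) :
  mu `<< nu -> continuous_sf (v_mu nu mu).
Proof.
move=> mu_ac I I_chain; exists (profile_measure nu mu \o shell_levels nu I).
by split; [exact: is_mu_v_I_profile_measure|exact: sigma_additive_profile_measure].
Qed.

Theorem theorem13 (d : measure_display) (T : measurableType d) (R : realType)
  (nu mu : {finite_measure set T -> \bar R}) :
  (exists I : set (set T), chain_class I) ->
  mu `<< nu ->
  [/\ (nondecreasing_sf (v_mu nu mu) /\ continuous_sf (v_mu nu mu) /\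
       submodular_sf (v_mu nu mu) /\ v_mu nu mu set0 = 0),
      (forall y : R, (0 <= y)%R ->
         v_mu nu mu [set w | y%:E < RN nu mu w] =
         mu [set w | y%:E < RN nu mu w]),
      (forall f : T -> R, measurable_fun setT f -> (forall w, (0 <= f w)%R) ->
         choquet (v_mu nu mu) f >=
         ereal_sup [set \int[mu']_w (f w)%:E |
           mu' in [set mu' : {finite_measure set T -> \bar R} |
                    mu' `<< nu /\ Fdist nu mu' = Fdist nu mu]]) &
      (forall A, measurable A ->
         v_mu nu mu A >=
         ereal_sup [set mu' A |
           mu' in [set mu' : {finite_measure set T -> \bar R} |
                    mu' `<< nu /\ Fdist nu mu' = Fdist nu mu]])].
Proof.
move=> _ mu_ac.
have le_sup (F : {finite_measure set T -> \bar R} -> \bar R) (x : \bar R) :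
    (forall mu' : {finite_measure set T -> \bar R},
      mu' `<< nu -> Fdist nu mu' = Fdist nu mu -> F mu' <= x) ->
    ereal_sup [set F mu' | mu' in [set mu' : {finite_measure set T -> \bar R} |
                                   mu' `<< nu /\ Fdist nu mu' = Fdist nu mu]] <= x.
  by move=> Fx; apply: ge_ereal_sup => _ [mu' [mu'_ac Fmu'] <-]; exact: Fx.
split.
- split; first exact: v_mu_nondecreasing.
  split; first exact: v_mu_continuous.
  by split; [exact: v_mu_submodular|exact: v_mu0].
- exact: v_mu_RN_gt.
- by move=> f mf f0; apply: le_sup => mu' mu'_ac Fmu'; exact: le_choquet_v_mu.
- by move=> A mA; apply: le_sup => mu' mu'_ac Fmu'; exact: le_v_mu.
Qed.
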